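(* Let $A\in\mathbb{R}^{m\times N}$, $\eta\ge 0$, let $x\in\mathbb{R}^N$ be nonzero and $k$-sparse, and let $y=Ax+\varepsilon$ with $\lVert\varepsilon\rVert_2\le\eta$. Let $1<q\le\infty$ and suppose $\rho_{q,3^{q/(q-1)}k}(A)>0$. Then any solution $\hat x$ of $$\min_{z\in\mathbb{R}^N\setminus\{0\}}\frac{\lVert z\rVert_1}{\lVert z\rVert_q}\quad\text{subject to}\quad \lVert y-Az\rVert_2\le\eta$$ obeys $$\lVert\hat x-x\rVert_q\le\frac{2\eta}{\rho_{q,3^{q/(q-1)}k}(A)},\qquad \lVert\hat x-x\rVert_1\le\frac{6k^{1-1/q}\eta}{\rho_{q,3^{q/(q-1)}k}(A)}.$$
   Context: For nonzero $z\in\mathbb{R}^N$ and $q\in(1,\infty)$, $s_q(z)=\left(\lVert z\rVert_1/\lVert z\rVert_q\right)^{q/(q-1)}$, and $s_\infty(z)=\lVert z\rVert_1/\lVert z\rVert_\infty$. For real $s\ge1$ and $q\in(1,\infty]$, the $q$-ratio constrained minimal singular value of $A$ is $\rho_{q,s}(A)=\min\{\lVert Az\rVert_2/\lVert z\rVert_q: z\ne0,\ s_q(z)\le s\}$. For $q=\infty$ interpret $q/(q-1)=1$ and $1-1/q=1$. A vector is $k$-sparse if it has at most $k$ nonzero entries. *)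

From HB Require Import structures.
From mathcomp Require Import all_boot all_order all_algebra.
From mathcomp Require Import all_classical all_reals all_analysis.
Set Implicit Arguments. Unset Strict Implicit. Unset Printing Implicit Defensive.
Import Order.TTheory GRing.Theory Num.Theory.
Local Open Scope ring_scope.

Section Defs.
Variable R : realType.

(* The exponent q is an extended real; the theorem assumes 1 < q (so q is a
   finite real r > 1 or +oo). *)

Definition l1norm (N : nat) (z : 'cV[R]_N) : R := \sum_i `|z i 0|.

Definition l2norm (N : nat) (z : 'cV[R]_N) : R := Num.sqrt (\sum_i (z i 0) ^+ 2).

Definition lqnorm (q : \bar R) (N : nat) (z : 'cV[R]_N) : R :=
  match q with
  | r%:E => (\sum_i `|z i 0| `^ r) `^ (r^-1)
  | _ => \big[Num.max/0]_i `|z i 0|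
  end.

Definition qexp (q : \bar R) : R :=
  match q with r%:E => r / (r - 1) | _ => 1 end.

Definition qdual (q : \bar R) : R :=
  match q with r%:E => 1 - r^-1 | _ => 1 end.

Definition sparsity_q (q : \bar R) (N : nat) (z : 'cV[R]_N) : R :=
  match q with
  | r%:E => (l1norm z / lqnorm q z) `^ (r / (r - 1))
  | _ => l1norm z / lqnorm q z
  end.

(* q-ratio constrained minimal singular value rho_{q,s}(A)
   (the minimum, expressed as the infimum of the attained values) *)
Definition rho_qs (q : \bar R) (s : R) (m N : nat) (A : 'M[R]_(m, N)) : R :=
  inf [set l2norm (A *m z) / lqnorm q z |
        z in [set z : 'cV[R]_N | z != 0 /\ sparsity_q q z <= s]].

Definition ksparse (k N : nat) (z : 'cV[R]_N) : Prop :=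
  (#|[set i | z i ord0 != 0%R]| <= k)%N.

Definition is_l1lq_solution (q : \bar R) (m N : nat) (A : 'M[R]_(m, N))
    (y : 'cV[R]_m) (eta : R) (xh : 'cV[R]_N) : Prop :=
  [/\ xh != 0, l2norm (y - A *m xh) <= eta &
      forall z : 'cV[R]_N, z != 0 -> l2norm (y - A *m z) <= eta ->
        l1norm xh / lqnorm q xh <= l1norm z / lqnorm q z].

End Defs.

From HB Require Import structures.
From mathcomp Require Import all_boot all_order all_algebra.
From mathcomp Require Import all_classical all_reals all_analysis.
From mathcomp Require Import ring lra.
Set Implicit Arguments. Unset Strict Implicit. Unset Printing Implicit Defensive.
Import Order.TTheory GRing.Theory Num.Theory.
Local Open Scope ring_scope.

(* Write h = xh - x and let S be the support of x.  By Hoelder, ||x||_1 / ||x||_q <= s with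
   s = k^(1-1/q); since x is feasible, minimality of the ratio at xh and the triangle
   inequality give ||xh||_1 <= ||x||_1 + s ||h||_q, while splitting along S gives
   ||xh||_1 >= ||x||_1 - ||h_S||_1 + ||h_{S^c}||_1.  Hence ||h||_1 <= 3 s ||h||_q, i.e.
   s_q(h) <= 3^(q/(q-1)) k, so rho ||h||_q <= ||A h||_2 <= 2 eta because x and xh both lie in
   the eta-tube around y.  The bound on ||h||_1 follows from the cone inequality.
   Minkowski's inequality for ||.||_q is derived from the subadditivity of the perspective
   of a |-> a^r. *)

Section PowerInequalities.
Variable R : realType.

Lemma ler_powR2r (p x y : R) : 0 <= p -> 0 <= x -> x <= y -> x `^ p <= y `^ p.
Proof.
by move=> p_ge0 x_ge0 le_xy; rewrite ge0_ler_powR // nnegrE (le_trans x_ge0).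
Qed.

Lemma powR_div_powRB1 (r c t : R) : 0 < r -> 0 <= c -> 0 < t ->
  c `^ r / t `^ (r - 1) = t * (c / t) `^ r.
Proof.
move=> r_gt0 c_ge0 t_gt0.
have inv_powR : (t^-1) `^ r = (t `^ r)^-1.
  by rewrite -powR_inv1 ?(ltW t_gt0) // -powRrM mulN1r powRN.
rewrite powRM ?invr_ge0 ?(ltW t_gt0) // inv_powR -(mulr_powRB1 (ltW t_gt0) r_gt0).
by field; rewrite !gt_eqF ?powR_gt0.
Qed.

(* Subadditivity of the perspective a^r / t^(r-1) = t (a / t)^r of the convex map a |-> a^r. *)
Lemma powR_perspectiveD (r a b s t : R) :
  1 <= r -> 0 <= a -> 0 <= b -> 0 < s -> 0 < t ->
  (a + b) `^ r / (s + t) `^ (r - 1) <= a `^ r / s `^ (r - 1) + b `^ r / t `^ (r - 1).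
Proof.
move=> r_ge1 a_ge0 b_ge0 s_gt0 t_gt0.
have r_gt0 : 0 < r by lra.
have st_gt0 : 0 < s + t by lra.
rewrite !powR_div_powRB1 ?addr_ge0 //.
set l := s / (s + t).
have l_ge0 : 0 <= l by rewrite divr_ge0 // ltW.
have l_le1 : l <= 1 by rewrite ler_pdivrMr // mul1r lerDl ltW.
have convexity : (l * (a / s) + (1 - l) * (b / t)) `^ r <=
    l * (a / s) `^ r + (1 - l) * (b / t) `^ r.
  have := convex_powR r_ge1 (Itv01 l_ge0 l_le1) (x := a / s) (y := b / t).
  by rewrite !convRE; apply; rewrite inE /= in_itv /= andbT divr_ge0 // ltW.
have -> : (a + b) / (s + t) = l * (a / s) + (1 - l) * (b / t).
  by rewrite /l; field; rewrite !gt_eqF.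
have -> : s * (a / s) `^ r + t * (b / t) `^ r =
    (s + t) * (l * (a / s) `^ r + (1 - l) * (b / t) `^ r).
  by rewrite /l; field; rewrite gt_eqF.
by rewrite ler_wpM2l // ltW.
Qed.

Lemma powR_sum_le_mean (r : R) (I : Type) (s : seq I) (f : I -> R) :
  1 <= r -> (forall i, 0 <= f i) ->
  (\sum_(i <- s) f i) `^ r / (size s)%:R `^ (r - 1) <= \sum_(i <- s) f i `^ r.
Proof.
move=> r_ge1 f_ge0; have r_gt0 : 0 < r by lra.
elim: s => [|i [|j s] IHs]; first by rewrite !big_nil powR0 ?mul0r // gt_eqF.
  by rewrite !big_seq1 powR1 divr1.
rewrite big_cons [in leRHS]big_cons.
rewrite (_ : (size _)%:R = 1 + (size (j :: s))%:R :> R); last by rewrite nat1r.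
have sum_ge0 : 0 <= \sum_(k <- j :: s) f k by exact: sumr_ge0.
have size_gt0 : 0 < (size (j :: s))%:R :> R by rewrite ltr0n.
apply: le_trans (powR_perspectiveD r_ge1 (f_ge0 i) sum_ge0 ltr01 size_gt0) _.
by rewrite powR1 divr1 lerD2l.
Qed.

Lemma sum_le_card_powR (r : R) (I : finType) (S : {set I}) (f : I -> R) :
  1 <= r -> (forall i, 0 <= f i) ->
  \sum_(i in S) f i <= #|S|%:R `^ (1 - r^-1) * (\sum_(i in S) f i `^ r) `^ r^-1.
Proof.
move=> r_ge1 f_ge0; have r_gt0 : 0 < r by lra.
have [/cards0_eq ->|S_neq0] := eqVneq #|S| 0%N.
  by rewrite big_set0 mulr_ge0 ?powR_ge0.
have S_gt0 : 0 < #|S|%:R :> R by rewrite ltr0n lt0n.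
have mean : (\sum_(i in S) f i) `^ r <= #|S|%:R `^ (r - 1) * \sum_(i in S) f i `^ r.
  have := powR_sum_le_mean (enum S) r_ge1 f_ge0.
  by rewrite !big_enum -cardE ler_pdivrMr ?powR_gt0 // mulrC.
have rV_ge0 : 0 <= r^-1 by rewrite invr_ge0 ltW.
have sum_powR_ge0 : 0 <= \sum_(i in S) f i `^ r by apply: sumr_ge0 => i _; exact: powR_ge0.
have := ler_powR2r rV_ge0 (powR_ge0 _ _) mean.
rewrite -powRrM mulfV ?gt_eqF // powRr1 ?sumr_ge0 // powRM ?powR_ge0 //.
by rewrite -(powRrM #|S|%:R) (_ : (r - 1) * r^-1 = 1 - r^-1) //; field; rewrite gt_eqF.
Qed.
End PowerInequalities.

Section LqNorm.
Variables (R : realType) (N : nat).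
Implicit Types (q : \bar R) (r : R) (u v z : 'cV[R]_N).

Lemma lqnorm_ge0 q z : 0 <= lqnorm q z.
Proof.
case: q => [r||]; first exact: powR_ge0.
all: by apply: (big_ind (>= 0)) => // a b a_ge0 b_ge0; rewrite le_max a_ge0.
Qed.

Lemma le_lqnormy z i : `|z i 0| <= lqnorm +oo%E z.
Proof. exact: le_bigmax. Qed.

Lemma powR_lqnorm r z : 0 < r -> lqnorm r%:E z `^ r = \sum_i `|z i 0| `^ r.
Proof.
move=> r_gt0; rewrite -powRrM mulVf ?gt_eqF // powRr1 //.
by apply: sumr_ge0 => i _; exact: powR_ge0.
Qed.

Lemma lqnorm_eq0 q z : (0 < q)%E -> (lqnorm q z == 0) = (z == 0).
Proof.
move=> q_gt0; apply/idP/idP => [|/eqP->]; last first.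
  case: q q_gt0 => [r /[!(@lte_fin R)] r_gt0|_|//].
    rewrite /lqnorm big1 => [|i _]; first by rewrite powR0 // invr_eq0 gt_eqF.
    by rewrite mxE normr0 powR0 ?gt_eqF.
  apply/eqP/le_anti; rewrite lqnorm_ge0 andbT.
  by apply: bigmax_le => // i _; rewrite mxE normr0.
move=> /eqP lqnorm_z0; apply/eqP/matrixP => i j; rewrite ord1 mxE; apply/normr0_eq0.
case: q q_gt0 lqnorm_z0 => [r /[!(@lte_fin R)] r_gt0|_|//].
  move=> /powR_eq0_eq0 sum_eq0; apply: (@powR_eq0_eq0 _ _ r).
  by apply: (psumr_eq0P _ sum_eq0) => // k _; exact: powR_ge0.
by move=> lqnorm_z0; apply/le_anti; rewrite normr_ge0 andbT -lqnorm_z0 le_lqnormy.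
Qed.

Lemma lqnorm_gt0 q z : (0 < q)%E -> z != 0 -> 0 < lqnorm q z.
Proof. by move=> q_gt0 z_neq0; rewrite lt0r lqnorm_eq0 // z_neq0 lqnorm_ge0. Qed.

Lemma lqnorm0 q : (0 < q)%E -> lqnorm q (0 : 'cV[R]_N) = 0.
Proof. by move=> q_gt0; apply/eqP; rewrite lqnorm_eq0. Qed.

(* Minkowski: bound each |u_i + v_i|^r by the perspective inequality with weights a and b;
   the bounds add up to (a + b)^r. *)
Lemma sum_powR_normD_le r u v a b : 1 <= r -> 0 < a -> 0 < b ->
  \sum_i `|u i 0| `^ r = a `^ r -> \sum_i `|v i 0| `^ r = b `^ r ->
  \sum_i `|(u + v) i 0| `^ r <= (a + b) `^ r.
Proof.
move=> r_ge1 a_gt0 b_gt0 sum_u sum_v; have r_gt0 : 0 < r by lra.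
have ab_gt0 : 0 < a + b by exact: addr_gt0.
pose w := (a + b) `^ (r - 1).
have w_gt0 : 0 < w by exact: powR_gt0.
have pointwise i : `|(u + v) i 0| `^ r <=
    w * (`|u i 0| `^ r / a `^ (r - 1) + `|v i 0| `^ r / b `^ (r - 1)).
  apply: le_trans (_ : _ <= w * ((`|u i 0| + `|v i 0|) `^ r / w)) _.
    rewrite mulrC divfK ?gt_eqF // mxE.
    exact: ler_powR2r (ltW r_gt0) (normr_ge0 _) (ler_normD _ _).
  rewrite ler_wpM2l ?(ltW w_gt0) //.
  exact: powR_perspectiveD r_ge1 (normr_ge0 _) (normr_ge0 _) a_gt0 b_gt0.
apply: le_trans (ler_sum _ (fun i _ => pointwise i)) _.
rewrite -mulr_sumr big_split /= -!mulr_suml sum_u sum_v.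
rewrite -{1}(mulr_powRB1 (ltW a_gt0) r_gt0) -{1}(mulr_powRB1 (ltW b_gt0) r_gt0).
by rewrite !mulfK ?gt_eqF ?powR_gt0 // /w mulrC (mulr_powRB1 (ltW ab_gt0) r_gt0).
Qed.

Lemma lqnormD_fin r u v : 1 <= r -> lqnorm r%:E (u + v) <= lqnorm r%:E u + lqnorm r%:E v.
Proof.
move=> r_ge1; have r_gt0 : 0 < r by lra.
have rE_gt0 : (0 < r%:E)%E by rewrite lte_fin.
have [->|u_neq0] := eqVneq u 0; first by rewrite add0r lqnorm0 // add0r.
have [->|v_neq0] := eqVneq v 0; first by rewrite addr0 lqnorm0 // addr0.
have := sum_powR_normD_le r_ge1 (lqnorm_gt0 rE_gt0 u_neq0) (lqnorm_gt0 rE_gt0 v_neq0)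
  (esym (powR_lqnorm u r_gt0)) (esym (powR_lqnorm v r_gt0)).
have rV_ge0 : 0 <= r^-1 by rewrite invr_ge0 ltW.
move=> /(ler_powR2r rV_ge0 (sumr_ge0 _ (fun i _ => powR_ge0 _ _))).
by rewrite -powRrM mulfV ?gt_eqF // powRr1 // addr_ge0 // lqnorm_ge0.
Qed.

Lemma lqnormD q u v : (1 <= q)%E -> lqnorm q (u + v) <= lqnorm q u + lqnorm q v.
Proof.
case: q => [r /[!(@lee_fin R)] r_ge1|_|//]; first exact: lqnormD_fin.
apply: bigmax_le => [|i _]; first by rewrite addr_ge0 ?lqnorm_ge0.
by rewrite mxE (le_trans (ler_normD _ _)) // lerD ?le_lqnormy.
Qed.

Lemma sum_le_lqnorm q k z (S : {set 'I_N}) : (1 <= q)%E -> (#|S| <= k)%N ->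
  \sum_(i in S) `|z i 0| <= k%:R `^ qdual q * lqnorm q z.
Proof.
move=> + S_le_k; have card_le : #|S|%:R <= k%:R :> R by rewrite ler_nat.
case: q => [r /[!(@lee_fin R)] r_ge1|_|//]; rewrite [qdual _]/=.
  have r_gt0 : 0 < r by lra.
  apply: le_trans (sum_le_card_powR S r_ge1 (fun i => normr_ge0 (z i 0))) _.
  have sum_le : \sum_(i in S) `|z i 0| `^ r <= \sum_i `|z i 0| `^ r.
    rewrite [leRHS](bigID (mem S)) /= lerDl.
    by apply: sumr_ge0 => i _; exact: powR_ge0.
  apply: ler_pM; rewrite ?powR_ge0 //; apply: ler_powR2r => //.
  - by rewrite subr_ge0 invf_le1.
  - by rewrite invr_ge0 ltW.
  - by apply: sumr_ge0 => i _; exact: powR_ge0.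
rewrite powRr1 // (le_trans (ler_sum _ (fun i _ => le_lqnormy z i))) //.
by rewrite sumr_const -[_ *+ #|S|]mulr_natl ler_wpM2r ?lqnorm_ge0.
Qed.

Lemma sparsity_q_le q k c z : (1 < q)%E -> z != 0 -> 0 <= c ->
  l1norm z <= c * k%:R `^ qdual q * lqnorm q z -> sparsity_q q z <= c `^ qexp q * k%:R.
Proof.
move=> q_gt1 z_neq0 c_ge0; have z_gt0 := lqnorm_gt0 (lt_trans lte01 q_gt1) z_neq0.
rewrite -ler_pdivrMr // => ratio_le.
have ratio_ge0 : 0 <= l1norm z / lqnorm q z.
  by rewrite divr_ge0 ?sumr_ge0 // ltW.
case: q q_gt1 z_gt0 ratio_le ratio_ge0 => [r /[!(@lte_fin R)] r_gt1|_|//] z_gt0;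
  rewrite /sparsity_q [qexp _]/= [qdual _]/= => ratio_le ratio_ge0; last first.
  by rewrite !powRr1 // in ratio_le *.
have e_ge0 : 0 <= r / (r - 1) by apply: divr_ge0; lra.
apply: le_trans (ler_powR2r e_ge0 ratio_ge0 ratio_le) _.
rewrite powRM ?powR_ge0 // -(powRrM k%:R).
have r_gt0 : 0 < r by lra.
have -> : (1 - r^-1) * (r / (r - 1)) = 1 by field; rewrite subr_eq0 !gt_eqF.
by rewrite powRr1.
Qed.

End LqNorm.

Section L2Norm.
Variable R : realType.

Lemma l2norm_ge0 m (z : 'cV[R]_m) : 0 <= l2norm z.
Proof. exact: sqrtr_ge0. Qed.

Lemma l2normE m (z : 'cV[R]_m) : l2norm z = lqnorm 2%:E z.
Proof.
rewrite /l2norm /lqnorm powR12_sqrt; last by apply: sumr_ge0 => i _; exact: powR_ge0.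
by congr Num.sqrt; apply: eq_bigr => i _; rewrite powR_mulrn // real_normK ?num_real.
Qed.

Lemma l2normD m (u v : 'cV[R]_m) : l2norm (u + v) <= l2norm u + l2norm v.
Proof. by rewrite !l2normE lqnormD_fin // ler1n. Qed.

Lemma l2normN m (u : 'cV[R]_m) : l2norm (- u) = l2norm u.
Proof. by congr Num.sqrt; apply: eq_bigr => i _; rewrite mxE sqrrN. Qed.

Lemma l2norm_mulmxB_le m N (A : 'M[R]_(m, N)) (y : 'cV[R]_m) (u v : 'cV[R]_N) :
  l2norm (A *m (u - v)) <= l2norm (y - A *m u) + l2norm (y - A *m v).
Proof.
have -> : A *m (u - v) = (y - A *m v) + - (y - A *m u).
  by rewrite mulmxBr opprB [RHS]addrC [RHS]addrA subrK.
by rewrite addrC (le_trans (l2normD _ _)) // l2normN addrC.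
Qed.

End L2Norm.

Section ConeConstraint.
Variables (R : realType) (N k : nat) (nq : 'cV[R]_N -> R) (s : R).
Implicit Types u v x z : 'cV[R]_N.
Hypothesis nq_ge0 : forall z, 0 <= nq z.
Hypothesis nq_gt0 : forall z, z != 0 -> 0 < nq z.
Hypothesis nqD : forall u v, nq (u + v) <= nq u + nq v.
Hypothesis sum_le_nq : forall z (S : {set 'I_N}), (#|S| <= k)%N ->
  \sum_(i in S) `|z i 0| <= s * nq z.

Lemma cone_constraint x xh : ksparse k x -> x != 0 -> xh != 0 ->
  l1norm xh / nq xh <= l1norm x / nq x -> l1norm (xh - x) <= 3 * s * nq (xh - x).
Proof.
move=> x_sparse x_neq0 xh_neq0 ratio_le.
have [h xh_def] : exists h, xh = x + h by exists (xh - x); rewrite addrC subrK.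
rewrite (_ : xh - x = h); last by rewrite xh_def addrC addKr.
set S := [set i | x i ord0 != 0].
have x_off_S i : i \notin S -> x i 0 = 0 by rewrite inE negbK => /eqP.
have x_gt0 := nq_gt0 x_neq0.
have l1_split z : l1norm z = \sum_(i in S) `|z i 0| + \sum_(i | i \notin S) `|z i 0|.
  exact: bigID.
have l1x : l1norm x = \sum_(i in S) `|x i 0|.
  by rewrite l1_split [X in _ + X]big1 ?addr0 // => i /x_off_S ->; rewrite normr0.
have ratio_x_le : l1norm x / nq x <= s by rewrite ler_pdivrMr // l1x sum_le_nq.
have upper : l1norm xh <= l1norm x + s * nq h.
  rewrite ler_pdivrMr ?nq_gt0 // in ratio_le.
  apply: (le_trans ratio_le); rewrite xh_def.
  apply: le_trans (ler_wpM2l _ (nqD x h)) _; first by rewrite divr_ge0 ?nq_ge0 ?sumr_ge0.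
  by rewrite mulrDr divfK ?gt_eqF // lerD2l ler_wpM2r.
have lower : l1norm x - \sum_(i in S) `|h i 0| + \sum_(i | i \notin S) `|h i 0| <= l1norm xh.
  rewrite l1x (l1_split xh) xh_def -sumrB; apply: lerD.
    by apply: ler_sum => i _; rewrite mxE lerB_normD.
  by apply: ler_sum => i /x_off_S; rewrite mxE => ->; rewrite add0r.
have := sum_le_nq h x_sparse.
by rewrite l1_split; lra.
Qed.

End ConeConstraint.

Lemma rho_qs_le (R : realType) (q : \bar R) (s : R) m N (A : 'M[R]_(m, N)) (z : 'cV[R]_N) :
  z != 0 -> sparsity_q q z <= s -> rho_qs q s A <= l2norm (A *m z) / lqnorm q z.
Proof.
move=> z_neq0 z_sparse; apply: ge_inf; last by exists z.
by exists 0 => _ [w _ <-]; rewrite divr_ge0 ?l2norm_ge0 ?lqnorm_ge0.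
Qed.

Theorem theorem1 (R : realType) (m N k : nat) (A : 'M[R]_(m, N)) (eta : R)
  (x : 'cV[R]_N) (eps : 'cV[R]_m) (y : 'cV[R]_m) (q : \bar R)
  (xh : 'cV[R]_N) :
  0 <= eta ->
  x != 0 -> ksparse k x ->
  y = A *m x + eps -> l2norm eps <= eta ->
  (1%:E < q)%E ->
  0 < rho_qs q (3 `^ qexp q * k%:R) A ->
  is_l1lq_solution q A y eta xh ->
  lqnorm q (xh - x) <= 2 * eta / rho_qs q (3 `^ qexp q * k%:R) A /\
  l1norm (xh - x) <= 6 * k%:R `^ qdual q * eta / rho_qs q (3 `^ qexp q * k%:R) A.
Proof.
move=> eta_ge0 x_neq0 x_sparse y_def eps_le q_gt1 rho_gt0 [xh_neq0 xh_feas xh_min].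
set rho := rho_qs _ _ _ in rho_gt0 *.
have q_gt0 : (0 < q)%E := lt_trans lte01 q_gt1.
have q_ge1 : (1 <= q)%E := ltW q_gt1.
have res_x : y - A *m x = eps by rewrite y_def addrC addKr.
have cone : l1norm (xh - x) <= 3 * k%:R `^ qdual q * lqnorm q (xh - x).
  apply: (cone_constraint (@lqnorm_ge0 R N q) (fun z => @lqnorm_gt0 R N q z q_gt0)
    (fun u v => lqnormD u v q_ge1) (fun z S => sum_le_lqnorm z q_ge1)) => //.
  by apply: xh_min; rewrite ?res_x.
have err_q : lqnorm q (xh - x) <= 2 * eta / rho.
  have [->|h_neq0] := eqVneq (xh - x) 0.
    by rewrite lqnorm0 // divr_ge0 ?mulr_ge0 // ltW.
  have h_sparse := sparsity_q_le q_gt1 h_neq0 (ler0n _ 3) cone.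
  rewrite ler_pdivlMr // mulrC -ler_pdivlMr ?lqnorm_gt0 //.
  apply: le_trans (rho_qs_le A h_neq0 h_sparse) _.
  rewrite ler_pM2r ?invr_gt0 ?lqnorm_gt0 //.
  by rewrite (le_trans (l2norm_mulmxB_le A y _ _)) // res_x; lra.
split => //; apply: le_trans cone _.
have -> : 6 * k%:R `^ qdual q * eta / rho = 3 * k%:R `^ qdual q * (2 * eta / rho) by ring.
by rewrite ler_wpM2l ?mulr_ge0 ?powR_ge0.
Qed.
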